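(* Let $A$ be a finite set, $C \subseteq O_A$ a total clone containing the constant function $c_a$ for some $a\in A$, and $X \in \mathcal{I}_{\mathrm{str}}(C)$. Then for every partial function $f$ on $A$: $f \in X$ if and only if $f_a \in X$.
   Context: A partial function of arity $n$ on $A$ is a map $f:\operatorname{dom} f\to A$ with $\operatorname{dom} f\subseteq A^n$; total if $\operatorname{dom} f=A^n$. $P_A$, $O_A$ denote the sets of partial, resp. total, functions. Composition $F=f(g_1,\dots,g_n)$ is given by $F(\mathbf{x})=f(g_1(\mathbf{x}),\dots,g_n(\mathbf{x}))$ on $\operatorname{dom} F=\{\mathbf{x}\in\bigcap_i\operatorname{dom} g_i : (g_1(\mathbf{x}),\dots,g_n(\mathbf{x}))\in\operatorname{dom} f\}$. A partial clone is a composition-closed subset of $P_A$ containing all projections; a total clone is one contained in $O_A$; a partial clone is strong if it contains all restrictions of its members. $\mathcal{I}_{\mathrm{str}}(C)$ is the set of strong partial clones $X$ with $X\cap O_A=C$. For an $n$-ary partial $f$ and $a\in A$, $f_a$ is the $(n+1)$-ary partial function with $\operatorname{dom} f_a=\{(a,\mathbf{x}):\mathbf{x}\in\operatorname{dom} f\}$ and $f_a(a,\mathbf{x})=f(\mathbf{x})$. *)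

From mathcomp Require Import all_boot.
Set Implicit Arguments. Unset Strict Implicit. Unset Printing Implicit Defensive.

(* Partial functions on A of arity n.+1 (arities are >= 1).  The domain of
   f : pfn A n is { x | f x <> None }, and f x = Some y means f(x) = y.   *)
Definition pfn (A : Type) (n : nat) := ('I_n.+1 -> A) -> option A.

Record pfun (A : Type) := PFun { pred_ar : nat; pfn_of : pfn A pred_ar }.
Arguments PFun {A pred_ar} pfn_of.
Arguments pfn_of {A} p _.

Definition pset (A : Type) := pfun A -> Prop.

Section Defs.
Variable A : finType.

Definition total (h : pfun A) : Prop := forall x, pfn_of h x <> None.

Definition proj (n : nat) (i : 'I_n.+1) : pfn A n := fun x => Some (x i).

Definition comp (n m : nat) (f : pfn A n) (g : 'I_n.+1 -> pfn A m) : pfn A m :=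
  fun x => if [forall i, isSome (g i x)]
           then f (fun i => odflt (x ord0) (g i x))
           else None.

Definition partial_clone (X : pset A) : Prop :=
  (forall n (i : 'I_n.+1), X (PFun (proj i))) /\
  (forall n m (f : pfn A n) (g : 'I_n.+1 -> pfn A m),
      X (PFun f) -> (forall i, X (PFun (g i))) -> X (PFun (comp f g))).

Definition total_clone (C : pset A) : Prop :=
  partial_clone C /\ (forall h, C h -> total h).

Definition restriction_of (n : nat) (g f : pfn A n) : Prop :=
  forall x, g x = None \/ g x = f x.

Definition strong_partial_clone (X : pset A) : Prop :=
  partial_clone X /\
  (forall n (f g : pfn A n), X (PFun f) -> restriction_of g f -> X (PFun g)).

Definition in_Istr (C X : pset A) : Prop :=
  strong_partial_clone X /\ (forall h, (X h /\ total h) <-> C h).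

Definition cst (a : A) : pfn A 0 := fun _ => Some a.

(* f_a : dom f_a = {(a, x) | x in dom f}, f_a(a, x) = f(x) *)
Definition ext (a : A) (n : nat) (f : pfn A n) : pfn A n.+1 :=
  fun x => if x ord0 == a then f (fun i => x (lift ord0 i)) else None.
End Defs.

From Pilot Require Import Defs.
From mathcomp Require Import all_boot.
From Stdlib Require Import FunctionalExtensionality.
Import Defs.
Set Implicit Arguments. Unset Strict Implicit. Unset Printing Implicit Defensive.

(* Proof idea: [f_a] is the restriction to [{a} x A^n] of the minor of [f]
   with a dummy first variable, so [f] in [X] gives [f_a] in [X] by strongness.
   Conversely, plugging the constant [c_a] (total, hence in [C], hence in [X])
   into the first variable of [f_a] gives back [f]. *)

Section PartialClones.
Variable A : finType.

Lemma comp_defined n m (f : pfn A n) (g : 'I_n.+1 -> pfn A m) x :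
  (forall i, isSome (g i x)) ->
  comp f g x = f (fun i => odflt (x ord0) (g i x)).
Proof. by move=> gx; rewrite /comp; have /forallP -> := gx. Qed.

Lemma partial_clone_minor (X : pset A) n m (f : pfn A n)
    (sigma : 'I_n.+1 -> 'I_m.+1) :
  partial_clone X -> X (PFun f) -> X (PFun (comp f (fun i => proj (sigma i)))).
Proof. by move=> [Xproj Xcomp] Xf; apply: Xcomp => // i; apply: Xproj. Qed.

Lemma ext_restriction_of_minor (a : A) n (f : pfn A n) :
  restriction_of (ext a f) (comp f (fun i => proj (lift ord0 i))).
Proof.
move=> x; rewrite /ext; case: (x ord0 == a); last by left.
by right; rewrite comp_defined.
Qed.

Definition cst_n (a : A) {n} : pfn A n := comp (cst a) (fun _ => proj ord0).

Lemma cst_nE (a : A) n (x : 'I_n.+1 -> A) : cst_n a x = Some a.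
Proof. by rewrite /cst_n comp_defined. Qed.

Definition subst_first (a : A) {n} (i : 'I_n.+2) : pfn A n :=
  if unlift ord0 i is Some j then proj j else cst_n a.

Lemma comp_ext_subst_first (a : A) n (f : pfn A n) :
  comp (ext a f) (subst_first a) = f.
Proof.
apply: functional_extensionality => x.
have defined i : isSome (subst_first a i x).
  by rewrite /subst_first; case: (unlift ord0 i) => [j|]; rewrite ?cst_nE.
rewrite comp_defined // /ext /subst_first unlift_none cst_nE /= eqxx.
by congr f; apply: functional_extensionality => i; rewrite liftK.
Qed.

End PartialClones.

Theorem mainTheorem14 (A : finType) (C X : pset A) (a : A) :
  total_clone C -> C (PFun (cst a)) -> in_Istr C X ->
  forall (n : nat) (f : pfn A n), X (PFun f) <-> X (PFun (ext a f)).
Proof.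
move=> _ Ca [[Xclone Xres] XC] n f; split => Xf.
- apply: Xres (ext_restriction_of_minor a f).
  exact: partial_clone_minor.
- have Xcst : X (PFun (cst a)) by apply XC.
  have Xsubst (i : 'I_n.+2) : X (PFun (subst_first a i)).
    rewrite /subst_first; case: (unlift ord0 i) => [j|]; first exact: Xclone.1.
    exact: partial_clone_minor.
  by rewrite -(comp_ext_subst_first a f); apply: Xclone.2.
Qed.
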